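(* Let $d\ge1$, let $\|\cdot\|$ be a norm on $\mathbb{R}^d$, let $\epsilon\ge0$, and consider either of the following two settings. (i) Least-squares regression: $k=1$, $(X,Y)$ is a random pair in $\mathbb{R}^d\times\mathbb{R}$, $\mathcal{F}$ is a class of functions $\mathbb{R}^d\to\mathbb{R}$, and the loss is $\ell(u,v)=(u-v)^2/2$. (ii) Multiclass classification: $k>1$, $\mathcal{F}$ is a class of functions from $\mathbb{R}^d$ to the unit simplex $\triangle^{k-1}=\{u\in\mathbb{R}^k: u_j\ge0,\ \sum_j u_j=1\}$, $(X,Y)$ is a random pair where $X\in\mathbb{R}^d$ and $Y$ takes values in the set of canonical basis vectors of $\mathbb{R}^k$, and the loss is the Kullback--Leibler divergence $\ell(u,v)=\sum_{j=1}^k v_j\log\frac{v_j}{u_j}$ (with the convention $0\log(0/u)=0$). In either setting, define for $f\in\mathcal{F}$ the mean local smoothness factor $$L_\epsilon(f)=\mathbb{E}\sup_{\Delta:\|\Delta\|\le\epsilon}\|f(X+\Delta)-f(X)\|_1^2.$$ Then for every $f\in\mathcal{F}$, $$R(f)+R_\epsilon(f)\ge\frac16\max\left\{L_\epsilon(f),\ \mathbb{E}\|Y-Y'\|_1^2\right\},$$ where, conditioned on $X$, $Y'$ is independent of $Y$ and has the same conditional distribution as $Y$ given $X$.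
   Context: $R(f)=\mathbb{E}\,\ell(f(X),Y)$ is the standard risk and $R_\epsilon(f)=\mathbb{E}\left(\sup_{\Delta\in\mathbb{R}^d:\|\Delta\|\le\epsilon}\ell(f(X+\Delta),Y)\right)$ is the adversarial risk, with $\ell$ the loss of the respective setting. $\|\cdot\|_1$ is the $\ell_1$ norm on $\mathbb{R}^k$ (for $k=1$, the absolute value). All expectations are assumed well defined (possibly $+\infty$). *)

From HB Require Import structures.
From mathcomp Require Import all_boot all_order all_algebra.
From mathcomp Require Import all_classical all_reals all_analysis.
From mathcomp Require Import measurable_realfun.

Set Implicit Arguments.
Unset Strict Implicit.
Unset Printing Implicit Defensive.

Import Order.TTheory GRing.Theory Num.Theory.
Local Open Scope ring_scope.
Local Open Scope classical_set_scope.

Definition is_norm (R : realType) (d : nat) (N : 'rV[R]_d -> R) : Prop :=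
  [/\ forall x, N x = 0 -> x = 0,
      forall (a : R) x, N (a *: x) = `|a| * N x &
      forall x y, N (x + y) <= N x + N y].

Definition l1norm (R : realType) (k : nat) (v : 'rV[R]_k) : R :=
  \sum_(j < k) `|v ord0 j|.

Definition in_simplex (R : realType) (k : nat) (u : 'rV[R]_k) : Prop :=
  (forall j, 0 <= u ord0 j) /\ \sum_(j < k) u ord0 j = 1.

Definition basis_vec (R : realType) (k : nat) (j : 'I_k) : 'rV[R]_k :=
  delta_mx ord0 j.

Definition adv_sup (R : realType) (d : nat) (N : 'rV[R]_d -> R) (eps : R)
  (g : 'rV[R]_d -> \bar R) : \bar R :=
  ereal_sup [set g D | D in [set D | N D <= eps]].

Definition sq_loss (R : realType) (u v : R) : \bar R := ((u - v) ^+ 2 / 2)%:E.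

(* one term v_j log(v_j / u_j) of the KL divergence, with 0 log(0/u) = 0
   and v log(v/0) = +oo for v > 0 *)
Definition kl_term (R : realType) (uj vj : R) : \bar R :=
  if vj == 0 then 0%E else if uj == 0 then +oo%E else (vj * ln (vj / uj))%:E.

Definition kl_loss (R : realType) (k : nat) (u v : 'rV[R]_k) : \bar R :=
  (\sum_(j < k) kl_term (u ord0 j) (v ord0 j))%E.

Local Open Scope ereal_scope.

(* ---------- Setting (i): least-squares regression ----------
   (X, Y): X : Omega -> R^d on the probability space (Omega, P), and the
   conditional law of Y given X = x is kappa x (a probability on R). *)

Definition risk_reg (R : realType) (dO : measure_display) (O : measurableType dO)
  (P : probability O R) (d : nat) (X : O -> 'rV[R]_d) (kappa : 'rV[R]_d -> probability R R)
  (f : 'rV[R]_d -> R) : \bar R :=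
  \int[P]_w \int[kappa (X w)]_y sq_loss (f (X w)) y.

Definition adv_risk_reg (R : realType) (dO : measure_display) (O : measurableType dO)
  (P : probability O R) (d : nat) (X : O -> 'rV[R]_d) (kappa : 'rV[R]_d -> probability R R)
  (N : 'rV[R]_d -> R) (eps : R) (f : 'rV[R]_d -> R) : \bar R :=
  \int[P]_w \int[kappa (X w)]_y adv_sup N eps (fun D => sq_loss (f (X w + D)%R) y).

Definition smooth_reg (R : realType) (dO : measure_display) (O : measurableType dO)
  (P : probability O R) (d : nat) (X : O -> 'rV[R]_d)
  (N : 'rV[R]_d -> R) (eps : R) (f : 'rV[R]_d -> R) : \bar R :=
  \int[P]_w adv_sup N eps (fun D => (`|(f (X w + D)%R - f (X w))%R| ^+ 2)%:E).

(* E |Y - Y'|^2, Y' a conditionally independent copy of Y given X *)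
Definition ydisp_reg (R : realType) (dO : measure_display) (O : measurableType dO)
  (P : probability O R) (d : nat) (X : O -> 'rV[R]_d) (kappa : 'rV[R]_d -> probability R R)
  : \bar R :=
  \int[P]_w \int[kappa (X w)]_y \int[kappa (X w)]_y' (`|y - y'| ^+ 2)%:E.

(* ---------- Setting (ii): multiclass classification ----------
   Y takes values in {e_1,...,e_k}; its conditional law given X = x is the
   probability vector p x: P(Y = e_j | X = x) = p x 0 j. *)

Definition risk_cls (R : realType) (dO : measure_display) (O : measurableType dO)
  (P : probability O R) (d k : nat) (X : O -> 'rV[R]_d) (p : 'rV[R]_d -> 'rV[R]_k)
  (f : 'rV[R]_d -> 'rV[R]_k) : \bar R :=
  \int[P]_w \sum_(j < k) (p (X w) ord0 j)%:E * kl_loss (f (X w)) (basis_vec R j).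

Definition adv_risk_cls (R : realType) (dO : measure_display) (O : measurableType dO)
  (P : probability O R) (d k : nat) (X : O -> 'rV[R]_d) (p : 'rV[R]_d -> 'rV[R]_k)
  (N : 'rV[R]_d -> R) (eps : R) (f : 'rV[R]_d -> 'rV[R]_k) : \bar R :=
  \int[P]_w \sum_(j < k) (p (X w) ord0 j)%:E *
     adv_sup N eps (fun D => kl_loss (f (X w + D)%R) (basis_vec R j)).

Definition smooth_cls (R : realType) (dO : measure_display) (O : measurableType dO)
  (P : probability O R) (d k : nat) (X : O -> 'rV[R]_d)
  (N : 'rV[R]_d -> R) (eps : R) (f : 'rV[R]_d -> 'rV[R]_k) : \bar R :=
  \int[P]_w adv_sup N eps (fun D => (l1norm ((f (X w + D)%R - f (X w))%R) ^+ 2)%:E).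

Definition ydisp_cls (R : realType) (dO : measure_display) (O : measurableType dO)
  (P : probability O R) (d k : nat) (X : O -> 'rV[R]_d) (p : 'rV[R]_d -> 'rV[R]_k)
  : \bar R :=
  \int[P]_w \sum_(i < k) \sum_(j < k)
     (p (X w) ord0 i * p (X w) ord0 j *
      l1norm (basis_vec R i - basis_vec R j)%R ^+ 2)%:E.

From HB Require Import structures.
From mathcomp Require Import all_boot all_order all_algebra.
From mathcomp Require Import all_classical all_reals all_analysis.
From mathcomp Require Import measurable_realfun.
From mathcomp Require Import ring lra.

(* Both terms of the max are bounded pointwise in X by 6 (r + s), where r and s
   are the conditional standard and adversarial risks; note r <= s (take D = 0).
   Square loss: (a - b)^2 <= 4 (l(c, a) + l(c, b)) for any c.  With
   a = f(X + D), b = f(X), c = Y this bounds the smoothness term by 4 (r + s);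
   with a = Y, b = Y', c = f(X) it bounds E |Y - Y'|^2 by 8 r.
   KL loss against one-hot labels: on the simplex l(u, e_j) = - ln u_j and
   |e_j - u|_1 = 2 (1 - u_j), and - ln t >= 4/3 (1 - t)^2, so
   |e_j - u|_1^2 <= 3 l(u, e_j).  The triangle inequality through e_j (resp.
   through f(X)) then bounds |f(X + D) - f(X)|_1^2 by
   6 (l(f(X), e_j) + l(f(X + D), e_j)) (resp. E |e_I - e_J|_1^2 by 12 r). *)

Set Implicit Arguments.
Unset Strict Implicit.
Unset Printing Implicit Defensive.

Import Order.TTheory GRing.Theory Num.Theory.
Local Open Scope ring_scope.
Local Open Scope classical_set_scope.

Lemma sqr_le_2sqrD (R : realDomainType) (l x y : R) :
  0 <= l -> l <= x + y -> l ^+ 2 <= 2 * (x ^+ 2 + y ^+ 2).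
Proof. by move=> l0 lxy; have := sqr_ge0 (x - y); rewrite !expr2; nra. Qed.

Lemma sqr1B_le_lnN (R : realType) (t : R) :
  0 < t -> t <= 1 -> 4 * (1 - t) ^+ 2 <= 3 * - ln t.
Proof.
move=> t0 t1; set s := Num.sqrt t.
have s0 : 0 < s by rewrite sqrtr_gt0.
have s1 : s <= 1 by rewrite -sqrtr1 ler_sqrt.
have <- : s ^+ 2 = t by rewrite sqr_sqrtr // (ltW t0).
have ln_s : ln s <= s - 1.
  by rewrite -[s in ln s](subrKC 1) le_ln1Dx // ltrBrDl subrr.
have ln_s2 : ln (s ^+ 2) = ln s *+ 2 by rewrite lnXn.
(* [6 (1 - s) - 4 (1 - s^2)^2 = 4 (1 - s) (s^3 + (s - 1/2)^2 + 1/4)] *)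
have key : 0 <= (1 - s) * (s ^+ 3 + (s - 2^-1) ^+ 2 + 4^-1).
  by apply: mulr_ge0; [lra | rewrite !addr_ge0 ?sqr_ge0 ?exprn_ge0 ?(ltW s0)].
rewrite ln_s2 mulr2n; rewrite !exprS expr0 in key *; nra.
Qed.

Section simplex.
Variables (R : realType) (k : nat).
Implicit Types (u v : 'rV[R]_k) (j : 'I_k).

Lemma in_simplex_entry u j : in_simplex u -> 0 <= u ord0 j <= 1.
Proof.
move=> [u0 u1]; rewrite u0 -u1 (bigD1 j) //= lerDl.
by apply: sumr_ge0 => i _.
Qed.

Lemma l1norm_ge0 u : 0 <= l1norm u.
Proof. exact: sumr_ge0. Qed.

Lemma l1normB_le u v : l1norm (u - v) <= l1norm u + l1norm v.
Proof. by rewrite -big_split; apply: ler_sum => i _; rewrite !mxE ler_normB. Qed.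

Lemma l1norm_distC u v : l1norm (u - v) = l1norm (v - u).
Proof. by apply: eq_bigr => i _; rewrite !mxE distrC. Qed.

Lemma sqr_l1normB_le u v (w : 'rV[R]_k) :
  l1norm (u - v) ^+ 2 <= 2 * (l1norm (w - u) ^+ 2 + l1norm (w - v) ^+ 2).
Proof.
apply: sqr_le_2sqrD; first exact: l1norm_ge0.
have -> : u - v = (w - v) - (w - u) by rewrite opprB [RHS]addrC addrA subrK.
by rewrite [leRHS]addrC l1normB_le.
Qed.

Lemma l1norm_basisB u j :
  in_simplex u -> l1norm (basis_vec R j - u) = 2 * (1 - u ord0 j).
Proof.
move=> hu; have [u0 u1] := hu; have /andP[_ uj1] := in_simplex_entry j hu.
rewrite /l1norm (bigD1 j) //= !mxE !eqxx /= ger0_norm ?subr_ge0 //.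
under eq_bigr => i ij do
  rewrite !mxE (negbTE ij) /= sub0r normrN ger0_norm //.
by move: u1; rewrite (bigD1 j) //= => u1; lra.
Qed.

Lemma sum_sqr_l1normB_le (n : nat) (q : 'I_n -> R) (x : 'I_n -> 'rV[R]_k)
    (w : 'rV[R]_k) :
  (forall i, 0 <= q i) -> \sum_i q i = 1 ->
  \sum_i \sum_j q i * q j * l1norm (x i - x j) ^+ 2 <=
  4 * \sum_i q i * l1norm (w - x i) ^+ 2.
Proof.
move=> q0 q1; pose e i := l1norm (w - x i) ^+ 2; pose E := \sum_i q i * e i.
apply: (@le_trans _ _ (\sum_i \sum_j q i * q j * (2 * (e i + e j)))).
  apply: ler_sum => i _; apply: ler_sum => j _.
  by rewrite ler_wpM2l ?mulr_ge0 ?sqr_l1normB_le.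
have row i : \sum_j q i * q j * (2 * (e i + e j)) = 2 * (q i * e i) + 2 * q i * E.
  rewrite mulr_sumr -[2 * (q i * e i)]mulr1 -q1 mulr_sumr -big_split /=.
  by apply: eq_bigr => j _; ring.
rewrite (eq_bigr _ (fun i _ => row i)) big_split /= -mulr_sumr -mulr_suml.
by rewrite -mulr_sumr q1 mulr1 -/E; lra.
Qed.

End simplex.

Local Open Scope ereal_scope.

Lemma double_mulEFin (R : realDomainType) (c : R) (x : \bar R) :
  (2 * c)%:E * x = c%:E * (x + x).
Proof. by rewrite mulrC EFinM -muleA mule_natl. Qed.

Lemma ge0_sumeZD (R : realDomainType) (n : nat) (q : 'I_n -> R) (c : R)
    (F G : 'I_n -> \bar R) :
  (forall j, 0 <= q j)%R -> (0 <= c)%R ->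
  (forall j, 0 <= F j) -> (forall j, 0 <= G j) ->
  \sum_j (q j)%:E * (c%:E * (F j + G j)) =
  c%:E * (\sum_j (q j)%:E * F j + \sum_j (q j)%:E * G j).
Proof.
move=> q0 c0 F0 G0; rewrite -big_split ge0_sume_distrr => [|j _]; last first.
  by rewrite adde_ge0 // mule_ge0 ?lee_fin.
by apply: eq_bigr => j _; rewrite muleCA ge0_muleDr ?lee_fin.
Qed.

Section kl_simplex.
Variables (R : realType) (k : nat).
Implicit Types (a b p : 'rV[R]_k) (j : 'I_k).

Lemma kl_term1E (t : R) : (0 < t)%R -> kl_term t 1 = (- ln t)%:E.
Proof. by move=> t0; rewrite /kl_term oner_eq0 gt_eqF // mul1r div1r lnV. Qed.

Lemma kl_term1_ge0 (t : R) : (0 <= t <= 1)%R -> 0 <= kl_term t 1.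
Proof.
case/andP=> t0 t1; have [->|tn0] := eqVneq t 0%R.
  by rewrite /kl_term oner_eq0 eqxx leey.
by rewrite kl_term1E ?lt_neqAle 1?eq_sym ?tn0 // lee_fin oppr_ge0 ln_le0.
Qed.

Lemma sqr1B_le_kl_term (t : R) :
  (0 <= t <= 1)%R -> (4 * (1 - t) ^+ 2)%:E <= 3%:E * kl_term t 1.
Proof.
case/andP=> t0 t1; have [->|tn0] := eqVneq t 0%R.
  by rewrite /kl_term oner_eq0 eqxx gt0_muley ?leey ?lte_fin.
rewrite kl_term1E ?lt_neqAle 1?eq_sym ?tn0 // -EFinM lee_fin.
by apply: sqr1B_le_lnN; rewrite // lt_neqAle eq_sym tn0.
Qed.

Lemma kl_loss_basis a j : kl_loss a (basis_vec R j) = kl_term (a ord0 j) 1.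
Proof.
rewrite /kl_loss (bigD1 j) //= big1 ?adde0 => [|i ij]; first by rewrite !mxE !eqxx.
by rewrite !mxE eqxx (negbTE ij) /kl_term eqxx.
Qed.

Lemma kl_loss_basis_ge0 a j : in_simplex a -> 0 <= kl_loss a (basis_vec R j).
Proof. by move=> ha; rewrite kl_loss_basis kl_term1_ge0 ?in_simplex_entry. Qed.

Lemma sqr_l1norm_basisB_le_kl a j : in_simplex a ->
  (l1norm (basis_vec R j - a) ^+ 2)%:E <= 3%:E * kl_loss a (basis_vec R j).
Proof.
move=> ha; rewrite l1norm_basisB // kl_loss_basis.
have -> : ((2 * (1 - a ord0 j)) ^+ 2 = 4 * (1 - a ord0 j) ^+ 2)%R by ring.
exact/sqr1B_le_kl_term/in_simplex_entry.
Qed.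

Lemma sqr_l1normB_le_kl a b j : in_simplex a -> in_simplex b ->
  (l1norm (b - a) ^+ 2)%:E <=
  6%:E * (kl_loss a (basis_vec R j) + kl_loss b (basis_vec R j)).
Proof.
move=> ha hb; apply: le_trans (_ : (2 * (l1norm (basis_vec R j - b) ^+ 2 +
    l1norm (basis_vec R j - a) ^+ 2))%:E <= _).
  by rewrite lee_fin sqr_l1normB_le.
have -> : (6 = 2 * 3 :> R)%R by lra.
rewrite !EFinM -muleA lee_wpmul2l // EFinD ge0_muleDr ?kl_loss_basis_ge0 //.
by rewrite [leRHS]addeC leeD // sqr_l1norm_basisB_le_kl.
Qed.

Lemma sum_sqr_l1norm_basisB_le_kl a p : in_simplex a -> in_simplex p ->
  \sum_(i < k) \sum_(j < k) (p ord0 i * p ord0 j *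
    l1norm (basis_vec R i - basis_vec R j) ^+ 2)%:E <=
  12%:E * \sum_j (p ord0 j)%:E * kl_loss a (basis_vec R j).
Proof.
move=> ha [p0 p1]; under eq_bigr do rewrite sumEFin; rewrite sumEFin.
apply: le_trans (_ : (4 * \sum_i p ord0 i *
    l1norm (a - basis_vec R i) ^+ 2)%:E <= _).
  by rewrite lee_fin sum_sqr_l1normB_le.
have -> : (12 = 4 * 3 :> R)%R by lra.
rewrite !EFinM -muleA lee_wpmul2l // -sumEFin ge0_sume_distrr => [|j _]; last first.
  by rewrite mule_ge0 ?lee_fin ?kl_loss_basis_ge0.
apply: lee_sum => i _; rewrite EFinM muleCA lee_wpmul2l ?lee_fin //.
by rewrite l1norm_distC sqr_l1norm_basisB_le_kl.
Qed.

Lemma sum_simplex_cst p (c : \bar R) : in_simplex p ->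
  \sum_j (p ord0 j)%:E * c = c.
Proof.
move=> [p0 p1]; rewrite -ge0_sume_distrl => [|j _]; last by rewrite lee_fin.
by rewrite sumEFin p1 mul1e.
Qed.

Lemma sum_simplex_ge0 p (F : 'I_k -> \bar R) : in_simplex p ->
  (forall j, 0 <= F j) -> 0 <= \sum_j (p ord0 j)%:E * F j.
Proof. by move=> [p0 _] F0; apply: sume_ge0 => j _; rewrite mule_ge0 ?lee_fin. Qed.

End kl_simplex.

Section adv_sup.
Variables (R : realType) (d : nat) (N : 'rV[R]_d -> R) (eps : R).
Implicit Types (g : 'rV[R]_d -> \bar R).

Lemma adv_sup_ub g D : (N D <= eps)%R -> g D <= adv_sup N eps g.
Proof. by move=> hD; apply: ereal_sup_ubound; exists D. Qed.

Lemma adv_sup_le g M : (forall D, (N D <= eps)%R -> g D <= M) -> adv_sup N eps g <= M.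
Proof. by move=> gM; apply: ge_ereal_sup => _ [D hD <-]; exact: gM. Qed.

Hypotheses (hN : is_norm N) (heps : (0 <= eps)%R).

Lemma adv_sup_at0 g : g 0%R <= adv_sup N eps g.
Proof.
apply: adv_sup_ub; case: hN => _ hZ _.
by rewrite -(scale0r 0%R) hZ normr0 mul0r.
Qed.

Lemma adv_sup_ge0 g : (forall D, 0 <= g D) -> 0 <= adv_sup N eps g.
Proof. by move=> g0; apply: le_trans (adv_sup_at0 g). Qed.

End adv_sup.

Section integral.
Variables (dT : measure_display) (T : measurableType dT) (R : realType).
Implicit Types (f g : T -> \bar R).

Lemma ge0_le_integralT (mu : {measure set T -> \bar R}) f g :
  (forall x, 0 <= f x) -> (forall x, f x <= g x) ->
  \int[mu]_x f x <= \int[mu]_x g x.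
Proof.
move=> f0 fg; have g0 x : 0 <= g x by apply: le_trans (fg x).
rewrite !ge0_integralTE //; apply: ereal_sup_le => _ [h hf <-].
by exists h => // x; apply: le_trans (fg x).
Qed.

Lemma ge0_integralZD (mu : {measure set T -> \bar R}) (c : R) f g :
  (0 <= c)%R -> measurable_fun setT f -> measurable_fun setT g ->
  (forall x, 0 <= f x) -> (forall x, 0 <= g x) ->
  \int[mu]_x (c%:E * (f x + g x)) = c%:E * (\int[mu]_x f x + \int[mu]_x g x).
Proof.
move=> c0 mf mg f0 g0; rewrite ge0_integralZl_EFin //.
- by rewrite ge0_integralD.
- by move=> x _; rewrite adde_ge0.
- exact: emeasurable_funD.
Qed.

Lemma integral_probability_cst (P : probability T R) (c : \bar R) :
  \int[P]_x c = c.
Proof. by rewrite integral_cst // -[RHS]mule1 -(probability_setT P). Qed.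

Lemma ge0_integral_maxe_le (mu : {measure set T -> \bar R}) (c : R) r s g h :
  (0 < c)%R -> measurable_fun setT r -> measurable_fun setT s ->
  (forall x, 0 <= r x) -> (forall x, 0 <= s x) ->
  (forall x, 0 <= g x) -> (forall x, 0 <= h x) ->
  (forall x, g x <= c%:E * (r x + s x)) -> (forall x, h x <= c%:E * (r x + s x)) ->
  (c^-1)%:E * maxe (\int[mu]_x g x) (\int[mu]_x h x) <=
  \int[mu]_x r x + \int[mu]_x s x.
Proof.
move=> c0 mr ms r0 s0 g0 h0 gc hc.
have int_le : maxe (\int[mu]_x g x) (\int[mu]_x h x) <=
    c%:E * (\int[mu]_x r x + \int[mu]_x s x).
  by rewrite -ge0_integralZD ?(ltW c0) // ge_max !ge0_le_integralT.
rewrite -[leRHS]mul1e -(mulVf (lt0r_neq0 c0)) EFinM -muleA.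
by rewrite lee_wpmul2l // lee_fin invr_ge0 (ltW c0).
Qed.

End integral.

Section least_squares.
Variable (R : realType).
Implicit Types (a b c y : R).

Lemma sq_loss_ge0 a y : 0 <= sq_loss a y.
Proof. by rewrite lee_fin divr_ge0 ?sqr_ge0. Qed.

Lemma sq_lossC a y : sq_loss a y = sq_loss y a.
Proof. by rewrite /sq_loss -sqrrN opprB. Qed.

Lemma measurable_sq_loss a : measurable_fun setT (sq_loss a).
Proof.
apply/measurable_EFinP; apply: measurable_funM => //.
by apply: measurable_funX; apply: measurable_funB.
Qed.

Lemma sqr_le_sq_lossD a b c :
  (`|a - b| ^+ 2)%:E <= 4%:E * (sq_loss c a + sq_loss c b).
Proof.
rewrite /sq_loss -EFinD -EFinM lee_fin real_normK ?num_real //.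
by have := sqr_ge0 (2 * c - a - b); rewrite !expr2; nra.
Qed.

Variable mu : probability R R.

Lemma sq_loss_smooth_le a b (S : R -> \bar R) :
  measurable_fun setT S -> (forall y, sq_loss b y <= S y) ->
  (`|b - a| ^+ 2)%:E <= 4%:E * (\int[mu]_y sq_loss a y + \int[mu]_y S y).
Proof.
move=> mS bS; have S0 y : 0 <= S y by apply: le_trans (bS y); exact: sq_loss_ge0.
rewrite -ge0_integralZD //; [|exact: measurable_sq_loss|exact: sq_loss_ge0].
rewrite -[leLHS](integral_probability_cst mu).
apply: ge0_le_integralT => y; first by rewrite lee_fin sqr_ge0.
apply: le_trans (sqr_le_sq_lossD b a y) _.
by rewrite !(sq_lossC y) addeC lee_wpmul2l // leeD2l.
Qed.

Lemma sq_loss_disp_le a :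
  \int[mu]_y \int[mu]_y' (`|y - y'| ^+ 2)%:E <= 8%:E * \int[mu]_y sq_loss a y.
Proof.
set I := \int[mu]_y sq_loss a y.
have I0 : 0 <= I by apply: integral_ge0 => y _; exact: sq_loss_ge0.
have intZD y : \int[mu]_y' (4%:E * (sq_loss a y + sq_loss a y')) =
    4%:E * (sq_loss a y + I).
  rewrite ge0_integralZD ?integral_probability_cst //.
  - exact: measurable_sq_loss.
  - by move=> _; exact: sq_loss_ge0.
  - exact: sq_loss_ge0.
have inner y : \int[mu]_y' (`|y - y'| ^+ 2)%:E <= 4%:E * (sq_loss a y + I).
  rewrite -intZD; apply: ge0_le_integralT => y'; first by rewrite lee_fin sqr_ge0.
  exact: sqr_le_sq_lossD.
apply: le_trans (ge0_le_integralT _ _ inner) _.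
  by move=> y; apply: integral_ge0 => y' _; rewrite lee_fin sqr_ge0.
rewrite ge0_integralZD ?integral_probability_cst //.
- by rewrite (_ : 8 = 2 * 4)%R ?double_mulEFin //; lra.
- exact: measurable_sq_loss.
- exact: sq_loss_ge0.
Qed.

End least_squares.

Section regression.
Variables (R : realType) (d : nat) (N : 'rV[R]_d -> R) (eps : R).
Variables (mu : probability R R) (f : 'rV[R]_d -> R) (x : 'rV[R]_d).
Hypothesis mS :
  measurable_fun setT (fun y => adv_sup N eps (fun D => sq_loss (f (x + D)%R) y)).

Lemma regression_smooth_le :
  adv_sup N eps (fun D => (`|f (x + D)%R - f x| ^+ 2)%:E) <=
  6%:E * (\int[mu]_y sq_loss (f x) y +
          \int[mu]_y adv_sup N eps (fun D => sq_loss (f (x + D)%R) y)).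
Proof.
apply: adv_sup_le => D hD.
apply: le_trans (sq_loss_smooth_le mu _ mS (fun y => adv_sup_ub _ hD)) _.
apply: lee_wpmul2r; last by rewrite lee_fin; lra.
apply: adde_ge0; apply: integral_ge0 => y _; first exact: sq_loss_ge0.
by apply: le_trans (adv_sup_ub _ hD); exact: sq_loss_ge0.
Qed.

Hypotheses (hN : is_norm N) (heps : (0 <= eps)%R).

Lemma regression_disp_le :
  \int[mu]_y \int[mu]_y' (`|y - y'| ^+ 2)%:E <=
  6%:E * (\int[mu]_y sq_loss (f x) y +
          \int[mu]_y adv_sup N eps (fun D => sq_loss (f (x + D)%R) y)).
Proof.
have risk_le : \int[mu]_y sq_loss (f x) y <=
    \int[mu]_y adv_sup N eps (fun D => sq_loss (f (x + D)%R) y).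
  apply: ge0_le_integralT => y; first exact: sq_loss_ge0.
  by have := adv_sup_at0 hN heps (fun D => sq_loss (f (x + D)%R) y); rewrite addr0.
apply: le_trans (sq_loss_disp_le mu (f x)) _.
apply: (@le_trans _ _ ((2 * 6)%:E * \int[mu]_y sq_loss (f x) y)).
  apply: lee_wpmul2r; last by rewrite lee_fin; lra.
  by apply: integral_ge0 => y _; exact: sq_loss_ge0.
by rewrite double_mulEFin lee_wpmul2l // leeD2l.
Qed.

End regression.

Section classification.
Variables (R : realType) (d k : nat) (N : 'rV[R]_d -> R) (eps : R).
Variables (p : 'rV[R]_k) (f : 'rV[R]_d -> 'rV[R]_k) (x : 'rV[R]_d).
Hypotheses (hp : in_simplex p) (hf : forall x, in_simplex (f x)).

Lemma classification_smooth_le :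
  adv_sup N eps (fun D => (l1norm (f (x + D)%R - f x) ^+ 2)%:E) <=
  6%:E * (\sum_j (p ord0 j)%:E * kl_loss (f x) (basis_vec R j) +
          \sum_j (p ord0 j)%:E *
            adv_sup N eps (fun D => kl_loss (f (x + D)%R) (basis_vec R j))).
Proof.
have [p0 _] := hp; apply: adv_sup_le => D hD.
rewrite -ge0_sumeZD // => [|j|j]; last 2 first.
- exact: kl_loss_basis_ge0.
- by apply: le_trans (adv_sup_ub _ hD); exact: kl_loss_basis_ge0.
rewrite -[leLHS](sum_simplex_cst _ hp); apply: lee_sum => j _.
rewrite lee_wpmul2l ?lee_fin //.
apply: le_trans (sqr_l1normB_le_kl j (hf x) (hf (x + D)%R)) _.
by rewrite lee_wpmul2l // leeD2l //; apply: adv_sup_ub.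
Qed.

Hypotheses (hN : is_norm N) (heps : (0 <= eps)%R).

Lemma classification_disp_le :
  \sum_(i < k) \sum_(j < k) (p ord0 i * p ord0 j *
    l1norm (basis_vec R i - basis_vec R j) ^+ 2)%:E <=
  6%:E * (\sum_j (p ord0 j)%:E * kl_loss (f x) (basis_vec R j) +
          \sum_j (p ord0 j)%:E *
            adv_sup N eps (fun D => kl_loss (f (x + D)%R) (basis_vec R j))).
Proof.
have [p0 _] := hp.
have risk_le : \sum_j (p ord0 j)%:E * kl_loss (f x) (basis_vec R j) <=
    \sum_j (p ord0 j)%:E *
      adv_sup N eps (fun D => kl_loss (f (x + D)%R) (basis_vec R j)).
  apply: lee_sum => j _; rewrite lee_wpmul2l ?lee_fin //.
  by have := adv_sup_at0 hN heps (fun D => kl_loss (f (x + D)%R) (basis_vec R j));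
    rewrite addr0.
apply: le_trans (sum_sqr_l1norm_basisB_le_kl (hf x) hp) _.
have -> : (12 = 2 * 6 :> R)%R by lra.
by rewrite double_mulEFin lee_wpmul2l // leeD2l.
Qed.

End classification.

Local Close Scope ereal_scope.

Theorem corollary1 :
  (* Setting (i): least-squares regression (k = 1) *)
  (forall (R : realType) (d : nat) (N : 'rV[R]_d -> R) (eps : R)
     (dO : measure_display) (O : measurableType dO) (P : probability O R)
     (X : O -> 'rV[R]_d) (kappa : 'rV[R]_d -> probability R R)
     (f : 'rV[R]_d -> R),
     (1 <= d)%N -> is_norm N -> 0 <= eps ->
     measurable_fun setT (fun w => (\int[kappa (X w)]_y sq_loss (f (X w)) y)%E) ->
     (forall w, measurable_fun setT
        (fun y : R => adv_sup N eps (fun D => sq_loss (f (X w + D)%R) y))) ->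
     measurable_fun setT (fun w => (\int[kappa (X w)]_y
        adv_sup N eps (fun D => sq_loss (f (X w + D)%R) y))%E) ->
     measurable_fun setT (fun w =>
        adv_sup N eps (fun D => (`|(f (X w + D)%R - f (X w))%R| ^+ 2)%:E)) ->
     measurable_fun setT (fun w =>
        (\int[kappa (X w)]_y \int[kappa (X w)]_y' (`|(y - y')%R| ^+ 2)%:E)%E) ->
     (risk_reg P X kappa f + adv_risk_reg P X kappa N eps f >=
        (6^-1)%:E * maxe (smooth_reg P X N eps f) (ydisp_reg P X kappa))%E)
  /\
  (* Setting (ii): multiclass classification (k > 1) with KL loss *)
  (forall (R : realType) (d k : nat) (N : 'rV[R]_d -> R) (eps : R)
     (dO : measure_display) (O : measurableType dO) (P : probability O R)
     (X : O -> 'rV[R]_d) (p : 'rV[R]_d -> 'rV[R]_k)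
     (f : 'rV[R]_d -> 'rV[R]_k),
     (1 <= d)%N -> (1 < k)%N -> is_norm N -> 0 <= eps ->
     (forall x, in_simplex (p x)) ->
     (forall x, in_simplex (f x)) ->
     measurable_fun setT (fun w =>
        (\sum_(j < k) (p (X w) ord0 j)%:E * kl_loss (f (X w)) (basis_vec R j))%E) ->
     measurable_fun setT (fun w =>
        (\sum_(j < k) (p (X w) ord0 j)%:E *
           adv_sup N eps (fun D => kl_loss (f (X w + D)%R) (basis_vec R j)))%E) ->
     measurable_fun setT (fun w =>
        adv_sup N eps (fun D => (l1norm ((f (X w + D)%R - f (X w))%R) ^+ 2)%:E)) ->
     measurable_fun setT (fun w =>
        (\sum_(i < k) \sum_(j < k)
           (p (X w) ord0 i * p (X w) ord0 j *
            l1norm (basis_vec R i - basis_vec R j)%R ^+ 2)%:E)%E) ->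
     (risk_cls P X p f + adv_risk_cls P X p N eps f >=
        (6^-1)%:E * maxe (smooth_cls P X N eps f) (ydisp_cls P X p))%E).
Proof.
split.
- move=> R d N eps dO O P X kappa f _ hN heps mr mS ms _ _.
  apply: (@ge0_integral_maxe_le _ _ _ _ 6) => // w.
  + by apply: integral_ge0 => y _; exact: sq_loss_ge0.
  + apply: integral_ge0 => y _.
    by apply: adv_sup_ge0 => // D; exact: sq_loss_ge0.
  + by apply: adv_sup_ge0 => // D; rewrite lee_fin sqr_ge0.
  + by do 2 apply: integral_ge0 => ? _; rewrite lee_fin sqr_ge0.
  + exact: regression_smooth_le.
  + exact: regression_disp_le.
- move=> R d k N eps dO O P X p f _ _ hN heps hp hf mr ms _ _.
  apply: (@ge0_integral_maxe_le _ _ _ _ 6) => // w.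
  + by apply: sum_simplex_ge0 => // j; exact: kl_loss_basis_ge0.
  + apply: sum_simplex_ge0 => // j.
    by apply: adv_sup_ge0 => // D; exact: kl_loss_basis_ge0.
  + by apply: adv_sup_ge0 => // D; rewrite lee_fin sqr_ge0.
  + have [p0 _] := hp (X w).
    apply: sume_ge0 => i _; apply: sume_ge0 => j _.
    by rewrite lee_fin; apply/mulr_ge0/sqr_ge0/mulr_ge0.
  + exact: classification_smooth_le.
  + exact: classification_disp_le.
Qed.
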